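(* Consider the convex problem $\mathcal{P}_n$ described in the context, and let $(\mathbf{V}_0^\ast,\{\mathbf{V}_k^\ast\},\boldsymbol{\Lambda}^\ast,\dots,\omega^\ast)$ be an optimal solution together with optimal Lagrange multipliers satisfying the KKT conditions (K2), (K4), (K5) of the context with $\psi_4^{k\ast}>0$. If $\mathrm{rank}(\mathbf{V}_k^\ast)>1$ for some $k\in\mathcal{K}$, then there exists a rank-one positive semidefinite matrix $\hat{\mathbf{V}}_k$ with $\mathbf{V}_k^\ast-\hat{\mathbf{V}}_k\succeq 0$ such that the point obtained from the optimal solution by replacing $\mathbf{V}_k^\ast$ with $\hat{\mathbf{V}}_k$ and $\boldsymbol{\Lambda}^\ast$ with $\hat{\boldsymbol{\Lambda}}=\boldsymbol{\Lambda}^\ast+(\mathbf{V}_k^\ast-\hat{\mathbf{V}}_k)$ (keeping $\mathbf{V}_0^\ast$ and all other variables unchanged) is feasible for $\mathcal{P}_n$ and attains the same objective value; here $\mathbf{V}_k^\ast-\hat{\mathbf{V}}_k$ is a nonnegative combination of projections onto an orthonormal basis of the null space of $\mathbf{Y}_k^\ast$ (the matrix $\mathbf{Y}_k$ evaluated at the optimal multipliers).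
   Context: Setting. Let $N,L,K,Z$ be positive integers and write $\mathcal{L}=\{1,\dots,L\}$, $\mathcal{K}=\{1,\dots,K\}$, $\mathcal{Z}=\{1,\dots,Z\}$. Given are row vectors $\mathbf{g}_l\in\mathbb{C}^{1\times N}$ ($l\in\mathcal{L}$; fronthaul channels from an $N$-antenna central processor to $L$ base stations), $\bar{\mathbf{h}}_k\in\mathbb{C}^{1\times L}$ ($k\in\mathcal{K}$; equivalent user channels) and $\bar{\mathbf{h}}^{e}_z\in\mathbb{C}^{1\times L}$ ($z\in\mathcal{Z}$; equivalent eavesdropper channels). Set $\mathbf{G}_l=\mathbf{g}_l^H\mathbf{g}_l$, $\bar{\mathbf{H}}_k=\bar{\mathbf{h}}_k^H\bar{\mathbf{h}}_k$, $\bar{\mathbf{H}}^e_z=(\bar{\mathbf{h}}^e_z)^H\bar{\mathbf{h}}^e_z$. Given are positive constants $W_{mm},W_{mc},N_0,P^{BS}_{\max},P^{AC}_{\max}$, $\eta=W_{mc}/W_{mm}$, and iteration constants $\beta_k^{[n]}>0$, $\varepsilon_k^{[n]}>0$, $\lambda_k^{[n]}\in\mathbb{R}$, $\tau_k^{[n]}>-1$ ($k\in\mathcal{K}$), $\mu_k^{z[n]}\in\mathbb{R}$, $\gamma_k^{z[n]}>-1$ ($k\in\mathcal{K},z\in\mathcal{Z}$). All logarithms are natural. Problem $\mathcal{P}_n$ (the rank-relaxed convex subproblem at iteration $n$). Variables: Hermitian $\mathbf{V}_0\in\mathbb{C}^{N\times N}$, Hermitian $\mathbf{V}_k\in\mathbb{C}^{L\times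 L}$ ($k\in\mathcal{K}$), Hermitian $\boldsymbol{\Lambda}\in\mathbb{C}^{L\times L}$, and real scalars $\varepsilon_k,\beta_k,\tau_k,\theta_k,\lambda_k$ ($k\in\mathcal{K}$), $\gamma_k^z,\zeta_k^z,\mu_k^z$ ($k\in\mathcal{K},z\in\mathcal{Z}$), $\omega$. Objective (to maximize): $\sum_{k=1}^K W_{mm}\big[\log(1+\beta_k)-\log(1+\gamma_k^{z[n]})-\frac{\gamma_k^z-\gamma_k^{z[n]}}{1+\gamma_k^{z[n]}}\big]$, which depends only on the scalar variables $\beta_k,\gamma_k^z$. Constraints, for all $k\in\mathcal{K}$, $z\in\mathcal{Z}$, $l\in\mathcal{L}$: (C1) $\sum_{k=1}^K\mathrm{Tr}(\mathbf{V}_k)+\mathrm{Tr}(\boldsymbol{\Lambda})\le P^{BS}_{\max}$; (C2) $\mathrm{Tr}(\mathbf{V}_0)\le P^{AC}_{\max}$; (C3) $\mathbf{V}_0\succeq 0$, $\mathbf{V}_k\succeq 0$, $\boldsymbol{\Lambda}\succeq 0$; (C4) $\varepsilon_k\ge\sum_{i\ne k}\mathrm{Tr}(\bar{\mathbf{H}}_k\mathbf{V}_i)+\mathrm{Tr}(\bar{\mathbf{H}}_k\boldsymbol{\Lambda})+W_{mm}N_0$; (C5) $\frac{\beta_k^{[n]}}{2\varepsilon_k^{[n]}}\varepsilon_k^2+\frac{\varepsilon_k^{[n]}}{2\beta_k^{[n]}}\beta_k^2\le\mathrm{Tr}(\bar{\mathbf{H}}_k\mathbf{V}_k)$; (C6)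 $\mathrm{Tr}(\bar{\mathbf{H}}^e_z\mathbf{V}_k)-\gamma_k^zW_{mm}N_0\le\zeta_k^z$; (C7) $\zeta_k^z\le 2\mu_k^{z[n]}\mu_k^z-(\mu_k^{z[n]})^2$; (C8) $\begin{bmatrix}\gamma_k^z&\mu_k^z\\ \mu_k^z&\sum_{i\ne k}\mathrm{Tr}(\bar{\mathbf{H}}^e_z\mathbf{V}_i)+\mathrm{Tr}(\bar{\mathbf{H}}^e_z\boldsymbol{\Lambda})\end{bmatrix}\succeq 0$; (C9) $\mathrm{Tr}(\mathbf{G}_l\mathbf{V}_0)\ge W_{mc}N_0(e^{\omega/\eta}-1)$ (equivalently $\omega\le\eta\log(1+\mathrm{Tr}(\mathbf{G}_l\mathbf{V}_0)/(W_{mc}N_0))$); (C10) $\mathrm{Tr}(\bar{\mathbf{H}}_k\mathbf{V}_k)-\tau_kW_{mm}N_0\le\theta_k$; (C11) $\theta_k\le 2\lambda_k^{[n]}\lambda_k-(\lambda_k^{[n]})^2$; (C12) $\begin{bmatrix}\tau_k&\lambda_k\\ \lambda_k&\sum_{i\ne k}\mathrm{Tr}(\bar{\mathbf{H}}_k\mathbf{V}_i)+\mathrm{Tr}(\bar{\mathbf{H}}_k\boldsymbol{\Lambda})\end{bmatrix}\succeq 0$; (C13) $\omega\ge\sum_{k=1}^K\big[\log(1+\tau_k^{[n]})+\frac{\tau_k-\tau_k^{[n]}}{1+\tau_k^{[n]}}\big]$. No rank constraint is imposed (SDP relaxation). Lagrange multipliers and KKT conditions. Associate nonnegative multipliers $\psi_1$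 with (C1), $\psi_2$ with (C2), $\psi_3^k$ with (C4), $\psi_4^k$ with (C5), $\psi_5^{z,k}$ with (C6), $\psi_7^k$ with (C10), $\psi_9^l$ with (C9), positive semidefinite matrices $\boldsymbol{\Omega}_k$ with $\mathbf{V}_k\succeq 0$ ($k=0,\dots,K$), and, following the paper, nonnegative scalars $\psi_6^{z,k}$ and $\psi_8^k$ accounting for (C8) and (C12) through Lagrangian terms $\psi_6^{z,k}\big(\sum_{i\ne k}\mathrm{Tr}(\bar{\mathbf{H}}^e_z\mathbf{V}_i)+\mathrm{Tr}(\bar{\mathbf{H}}^e_z\boldsymbol{\Lambda})\big)$ and $\psi_8^k\big(\sum_{i\ne k}\mathrm{Tr}(\bar{\mathbf{H}}_k\mathbf{V}_i)+\mathrm{Tr}(\bar{\mathbf{H}}_k\boldsymbol{\Lambda})\big)$. For $k\in\mathcal{K}$ define $\mathbf{Y}_k=\psi_1\mathbf{I}+\sum_{i\ne k}(\psi_3^i-\psi_8^i)\bar{\mathbf{H}}_i+\sum_{z=1}^Z\big(\psi_5^{z,k}-\sum_{i\ne k}\psi_6^{z,i}\big)\bar{\mathbf{H}}^e_z+\psi_7^k\bar{\mathbf{H}}_k$. ''Optimal Lagrange multipliers'' are multipliers which, together with an optimal solution of $\mathcal{P}_n$, satisfy the KKT conditions, in particular: (K1) $\boldsymbol{\Omega}_0=\psi_2\mathbf{I}-\sum_{l=1}^L\psi_9^l\mathbf{G}_l$; (K2) $\boldsymbol{\Omega}_k=\mathbf{Y}_k-\psi_4^k\bar{\mathbf{H}}_k$,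 $k\in\mathcal{K}$; (K3) $\psi_9^l\big(\mathrm{Tr}(\mathbf{G}_l\mathbf{V}_0)-W_{mc}N_0(e^{\omega/\eta}-1)\big)=0$, $l\in\mathcal{L}$; (K4) $\boldsymbol{\Omega}_k\mathbf{V}_k=\mathbf{0}$, $k=0,\dots,K$; (K5) $\boldsymbol{\Omega}_k\succeq 0$, $k=0,\dots,K$. *)

(* Complex scalars: an arbitrary numClosedFieldType C
   (e.g. algC); real scalars are elements x of C with x \is Num.real. *)
From HB Require Import structures.
From mathcomp Require Import all_boot all_order all_algebra.
Set Implicit Arguments. Unset Strict Implicit. Unset Printing Implicit Defensive.
Import Order.TTheory GRing.Theory Num.Theory.
Local Open Scope ring_scope.

Section Defs.
Variable C : numClosedFieldType.

Definition adj m n (A : 'M[C]_(m, n)) : 'M[C]_(n, m) := (map_mx Num.conj A)^T.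

Definition psd n (A : 'M[C]_n) : Prop :=
  adj A = A /\ forall x : 'cV[C]_n, 0 <= (adj x *m A *m x) ord0 ord0.

Definition mx2 (a b c d : C) : 'M[C]_2 :=
  \matrix_(i < 2, j < 2)
    if (i : nat) == 0%N then (if (j : nat) == 0%N then a else b)
    else (if (j : nat) == 0%N then c else d).

Definition real (x : C) : Prop := x \is Num.real.

(* Problem data (including the iteration constants of iteration n). *)
Record data (N L K Z : nat) := Data {
  gv : 'I_L -> 'rV[C]_N;
  hv : 'I_K -> 'rV[C]_L;
  hev : 'I_Z -> 'rV[C]_L;
  Wmm : C; Wmc : C; N0 : C; PBS : C; PAC : C;
  betan : 'I_K -> C; epsn : 'I_K -> C; lamn : 'I_K -> C; taun : 'I_K -> C;
  mun : 'I_K -> 'I_Z -> C;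
  gamn : 'I_K -> 'I_Z -> C
}.

Definition data_ok N L K Z (d : data N L K Z) : Prop :=
  [/\ 0 < Wmm d, 0 < Wmc d, 0 < N0 d, 0 < PBS d & 0 < PAC d] /\
  (forall k, [/\ 0 < betan d k, 0 < epsn d k, real (lamn d k) & -1 < taun d k]) /\
  (forall k z, real (mun d k z) /\ -1 < gamn d k z).

Definition eta N L K Z (d : data N L K Z) : C := Wmc d / Wmm d.

Definition Gm N L K Z (d : data N L K Z) l : 'M[C]_N := adj (gv d l) *m gv d l.
Definition Hm N L K Z (d : data N L K Z) k : 'M[C]_L := adj (hv d k) *m hv d k.
Definition Hem N L K Z (d : data N L K Z) z : 'M[C]_L := adj (hev d z) *m hev d z.

Record point (N L K Z : nat) := Point {
  V0 : 'M[C]_N;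
  Vk : 'I_K -> 'M[C]_L;
  Lam : 'M[C]_L;
  eps : 'I_K -> C; beta : 'I_K -> C; tau : 'I_K -> C; theta : 'I_K -> C;
  lam : 'I_K -> C;
  gam : 'I_K -> 'I_Z -> C; zeta : 'I_K -> 'I_Z -> C; mu : 'I_K -> 'I_Z -> C;
  om : C
}.

Definition interf N L K Z (p : point N L K Z) (A : 'M[C]_L) (k : 'I_K) : C :=
  \sum_(i < K | i != k) \tr (A *m Vk p i) + \tr (A *m Lam p).

(* Feasibility of P_n; [ln] and [ex] play the role of the natural logarithm
   and exponential. *)
Definition feasible (ln ex : C -> C) N L K Z (d : data N L K Z)
    (p : point N L K Z) : Prop :=
  (forall k, [/\ real (eps p k), real (beta p k), real (tau p k),
                 real (theta p k) & real (lam p k)]) /\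
  (forall k z, [/\ real (gam p k z), real (zeta p k z) & real (mu p k z)]) /\
  real (om p) /\
  \sum_(k < K) \tr (Vk p k) + \tr (Lam p) <= PBS d /\
  \tr (V0 p) <= PAC d /\
  (psd (V0 p) /\ (forall k, psd (Vk p k)) /\ psd (Lam p)) /\
  (forall k, interf p (Hm d k) k + Wmm d * N0 d <= eps p k) /\
  (forall k, betan d k / (2 * epsn d k) * eps p k ^+ 2
                      + epsn d k / (2 * betan d k) * beta p k ^+ 2
                      <= \tr (Hm d k *m Vk p k)) /\
  (forall k z, \tr (Hem d z *m Vk p k) - gam p k z * Wmm d * N0 d
                        <= zeta p k z) /\
  (forall k z, zeta p k z <= 2 * mun d k z * mu p k z - mun d k z ^+ 2) /\
  (forall k z, psd (mx2 (gam p k z) (mu p k z) (mu p k z)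
                                 (interf p (Hem d z) k))) /\
  (forall l, Wmc d * N0 d * (ex (om p / eta d) - 1)
                      <= \tr (Gm d l *m V0 p)) /\
  (forall k, \tr (Hm d k *m Vk p k) - tau p k * Wmm d * N0 d
                       <= theta p k) /\
  (forall k, theta p k <= 2 * lamn d k * lam p k - lamn d k ^+ 2) /\
  (forall k, psd (mx2 (tau p k) (lam p k) (lam p k)
                                 (interf p (Hm d k) k))) /\
  \sum_(k < K) (ln (1 + taun d k) + (tau p k - taun d k) / (1 + taun d k))
              <= om p.

(* Objective of P_n; z0 is the eavesdropper index appearing in it. *)
Definition objective (ln : C -> C) N L K Z (d : data N L K Z) (z0 : 'I_Z)
    (p : point N L K Z) : C :=
  \sum_(k < K) Wmm d * (ln (1 + beta p k) - ln (1 + gamn d k z0)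
                        - (gam p k z0 - gamn d k z0) / (1 + gamn d k z0)).

Definition optimal (ln ex : C -> C) N L K Z (d : data N L K Z) (z0 : 'I_Z)
    (p : point N L K Z) : Prop :=
  feasible ln ex d p /\
  forall q, feasible ln ex d q -> objective ln d z0 q <= objective ln d z0 p.

Definition Ymx N L K Z (d : data N L K Z) (psi1 : C)
    (psi3 psi7 psi8 : 'I_K -> C) (psi5 psi6 : 'I_K -> 'I_Z -> C) (k : 'I_K)
    : 'M[C]_L :=
  psi1%:M + \sum_(i < K | i != k) (psi3 i - psi8 i) *: Hm d i
  + \sum_(z < Z) (psi5 k z - \sum_(i < K | i != k) psi6 i z) *: Hem d z
  + psi7 k *: Hm d k.

Definition replace N L K Z (p : point N L K Z) (k : 'I_K) (Vh Lh : 'M[C]_L)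
    : point N L K Z :=
  Point (V0 p) (fun i => if i == k then Vh else Vk p i) Lh
        (eps p) (beta p) (tau p) (theta p) (lam p)
        (gam p) (zeta p) (mu p) (om p).

End Defs.

(* Set W := V_k - Vh.  If W is positive semidefinite and h_k W = 0, moving W from
   V_k into the artificial noise Lambda keeps every term involving H_k, and the
   power budget, unchanged; it can only lower the eavesdroppers' signal terms and
   raise their interference terms, which only relaxes (C6) and (C8).  A rank-one Vh with these
   properties is (V u)(V u)^H / (u^H V u) with V = V_k and u = h_k^H (or any u with
   V u <> 0 if h_k V = 0): W is positive semidefinite by Cauchy-Schwarz for the
   form of V.  Finally Y_k = Omega_k + psi_4 H_k is positive semidefinite and
   annihilates W, so a common orthonormal eigenbasis of the commuting pair (Y_k, W)
   exhibits W as a nonnegative combination of projections onto an orthonormal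
   basis of ker Y_k. *)

From HB Require Import structures.
From mathcomp Require Import all_boot all_order all_algebra.
From mathcomp Require Import sesquilinear spectral.
From mathcomp Require Import ring.
Set Implicit Arguments. Unset Strict Implicit. Unset Printing Implicit Defensive.
Import Order.TTheory GRing.Theory Num.Theory.
Local Open Scope ring_scope.

Section Adjoint.
Variable C : numClosedFieldType.

Lemma adjE m n (A : 'M[C]_(m, n)) i j : adj A i j = (A j i)^*.
Proof. by rewrite !mxE. Qed.

Lemma adjK m n (A : 'M[C]_(m, n)) : adj (adj A) = A.
Proof. by apply/matrixP=> i j; rewrite !adjE conjCK. Qed.

Lemma adjM m n p (A : 'M[C]_(m, n)) (B : 'M_(n, p)) : adj (A *m B) = adj B *m adj A.
Proof. by rewrite /adj map_mxM trmx_mul. Qed.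

Lemma adjD m n (A B : 'M[C]_(m, n)) : adj (A + B) = adj A + adj B.
Proof. by rewrite /adj map_mxD linearD. Qed.

Lemma adjN m n (A : 'M[C]_(m, n)) : adj (- A) = - adj A.
Proof. by rewrite /adj map_mxN linearN. Qed.

Lemma adjB m n (A B : 'M[C]_(m, n)) : adj (A - B) = adj A - adj B.
Proof. by rewrite adjD adjN. Qed.

Lemma adjZ m n a (A : 'M[C]_(m, n)) : adj (a *: A) = a^* *: adj A.
Proof. by rewrite /adj map_mxZ linearZ. Qed.

Lemma adj0 m n : adj (0 : 'M[C]_(m, n)) = 0.
Proof. by rewrite /adj map_mx0 linear0. Qed.

Lemma adj_tstar m n (A : 'M[C]_(m, n)) : adj A = (A ^t* )%sesqui.
Proof. by rewrite /adj map_trmx. Qed.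

End Adjoint.

Section HermitianForm.
Variable C : numClosedFieldType.

Definition hform n (A : 'M[C]_n) (x y : 'cV[C]_n) : C := (adj x *m A *m y) 0 0.

Variables (n : nat) (A : 'M[C]_n).

Lemma hformBl x1 x2 y : hform A (x1 - x2) y = hform A x1 y - hform A x2 y.
Proof. by rewrite /hform adjB !mulmxBl mxE [X in _ + X]mxE. Qed.

Lemma hformBr x y1 y2 : hform A x (y1 - y2) = hform A x y1 - hform A x y2.
Proof. by rewrite /hform mulmxBr mxE [X in _ + X]mxE. Qed.

Lemma hformZl a x y : hform A (a *: x) y = a^* * hform A x y.
Proof. by rewrite /hform adjZ -!scalemxAl mxE. Qed.

Lemma hformZr a x y : hform A x (a *: y) = a * hform A x y.
Proof. by rewrite /hform -!scalemxAr mxE. Qed.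

Lemma hform_conj x y : adj A = A -> (hform A x y)^* = hform A y x.
Proof. by move=> hA; rewrite /hform -adjE !adjM adjK hA mulmxA. Qed.

End HermitianForm.

Section SquaredNorm.
Variable C : numClosedFieldType.

Lemma adj_mulmx_sumE n (w : 'cV[C]_n) : (adj w *m w) 0 0 = \sum_i `|w i 0| ^+ 2.
Proof. by rewrite mxE; apply: eq_bigr => i _; rewrite adjE normCKC. Qed.

Lemma adj_mulmx_ge0 n (w : 'cV[C]_n) : 0 <= (adj w *m w) 0 0.
Proof. by rewrite adj_mulmx_sumE sumr_ge0 // => i _; rewrite exprn_ge0. Qed.

Lemma adj_mulmx_eq0 n (w : 'cV[C]_n) : (adj w *m w) 0 0 = 0 -> w = 0.
Proof.
rewrite adj_mulmx_sumE => /psumr_eq0P w0; apply/matrixP => i j; rewrite ord1 mxE.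
have /eqP := w0 (fun _ _ => exprn_ge0 _ (normr_ge0 _)) i isT.
by rewrite sqrf_eq0 normr_eq0 => /eqP.
Qed.

End SquaredNorm.

Section PositiveSemidefinite.
Variable C : numClosedFieldType.

Lemma psd_hform_ge0 n (V : 'M[C]_n) x : psd V -> 0 <= hform V x x.
Proof. by case=> _; apply. Qed.

Lemma psdD n (A B : 'M[C]_n) : psd A -> psd B -> psd (A + B).
Proof.
move=> [hA qA] [hB qB]; split; first by rewrite adjD hA hB.
by move=> x; rewrite mulmxDr mulmxDl mxE addr_ge0.
Qed.

Lemma psdZ n a (A : 'M[C]_n) : 0 <= a -> psd A -> psd (a *: A).
Proof.
move=> a0 [hA qA]; split; first by rewrite adjZ hA geC0_conj.
by move=> x; rewrite -scalemxAr -scalemxAl mxE mulr_ge0.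
Qed.

Lemma psd_outer n (u : 'cV[C]_n) : psd (u *m adj u).
Proof.
split=> [|x]; first by rewrite adjM adjK.
rewrite mulmxA -mulmxA mxE big_ord1 -[adj x *m u]adjK adjM adjK adjE.
by rewrite mulrC mul_conjC_ge0.
Qed.

Lemma psd_mulmx_eq0 n (V : 'M[C]_n) x : psd V -> hform V x x = 0 -> V *m x = 0.
Proof.
move=> psdV xVx; have [hV _] := psdV.
set w := V *m x; set nw := (adj w *m w) 0 0; set b := hform V w w.
have xVw : hform V x w = nw by rewrite /hform /nw /w adjM hV mulmxA.
have wVx : hform V w x = nw by rewrite /hform -mulmxA.
have nw0 : 0 <= nw := adj_mulmx_ge0 w.
(* The form at [(b + 1) x - |V x|^2 V x] is [- |V x|^4 (b + 2)]. *)
have := psd_hform_ge0 ((b + 1) *: x - nw *: w) psdV.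
rewrite hformBl !hformBr !hformZl !hformZr xVx xVw wVx -/b.
rewrite (geC0_conj nw0) geC0_conj; last by rewrite addr_ge0 ?psd_hform_ge0.
rewrite [X in 0 <= X](_ : _ = - (nw ^+ 2 * (b + 2))); last by ring.
rewrite oppr_ge0 pmulr_lle0 ?ltr_wpDl ?psd_hform_ge0 // => nw2.
have : nw ^+ 2 == 0 by rewrite eq_le nw2 exprn_ge0.
by rewrite sqrf_eq0 => /eqP /adj_mulmx_eq0.
Qed.

Lemma psd_cauchy_schwarz n (V : 'M[C]_n) x y : psd V ->
  0 <= hform V y y * (hform V y y * hform V x x - hform V y x * (hform V y x)^*).
Proof.
move=> psdV; have := psd_hform_ge0 (hform V y y *: x - hform V y x *: y) psdV.
rewrite hformBl !hformBr !hformZl !hformZr -(hform_conj x y psdV.1).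
rewrite (geC0_conj (psd_hform_ge0 y psdV)) conjCK => ge0.
by apply: (le_trans ge0); rewrite le_eqVlt; apply/orP; left; apply/eqP; ring.
Qed.

Lemma psd_mxtrace_outer_ge0 n (h : 'rV[C]_n) (M : 'M[C]_n) :
  psd M -> 0 <= \tr (adj h *m h *m M).
Proof.
move=> psdM; rewrite -mulmxA mxtrace_mulC /mxtrace big_ord1 -{1}[h]adjK.
exact: psd_hform_ge0.
Qed.

Lemma psd_mx2_addr (a b c e : C) : psd (mx2 a b b c) -> 0 <= e -> psd (mx2 a b b (c + e)).
Proof.
move=> psdM e_ge0; pose v : 'rV[C]_2 := \row_(j < 2) ((j : nat) == 1%N)%:R.
have -> : mx2 a b b (c + e) = mx2 a b b c + e *: (adj v *m v).
  apply/matrixP=> i j; rewrite !mxE big_ord1 !mxE.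
  by case: i => [[|[|i]] hi] //; case: j => [[|[|j]] hj] //=; rewrite ?rmorph0 ?rmorph1; ring.
by apply: psdD => //; apply: psdZ => //; rewrite -[X in _ *m X]adjK; apply: psd_outer.
Qed.

End PositiveSemidefinite.

Section Spectral.
Variable C : numClosedFieldType.

Lemma col_mulmx m n p (A : 'M[C]_(m, n)) (B : 'M_(n, p)) j : col j (A *m B) = A *m col j B.
Proof. by rewrite !colE mulmxA. Qed.

Lemma mulmx_sum_col m n (A : 'M[C]_(m, n)) (c : 'cV_n) : A *m c = \sum_j c j 0 *: col j A.
Proof.
apply/matrixP=> i k; rewrite ord1 !mxE summxE; apply: eq_bigr => j _.
by rewrite !mxE mulrC.
Qed.

Lemma adj_col_mul_col m n p (Q : 'M[C]_(m, n)) (B : 'M[C]_(m, p)) i j :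
  (adj (col i Q) *m col j B) 0 0 = (adj Q *m B) i j.
Proof. by rewrite !mxE; apply: eq_bigr => l _; rewrite !mxE. Qed.

Lemma hermitian_eigenbasis n (A : 'M[C]_n) : adj A = A ->
  exists (Q : 'M[C]_n) (lam : 'I_n -> C),
    [/\ adj Q *m Q = 1%:M, forall j, lam j \is Num.real
      & forall j, A *m col j Q = lam j *: col j Q].
Proof.
move=> hA; have /orthomx_spectralP AE : A \is normalmx.
  by apply/normalmxP; rewrite -adj_tstar hA.
set P := spectralmx A in AE; set sp := spectral_diag A in AE.
have PQ : P *m adj P = 1%:M.
  by rewrite adj_tstar; apply/unitarymxP/spectral_unitarymx.
have QQ : adj (adj P) *m adj P = 1%:M by rewrite adjK.
have eig j : A *m col j (adj P) = sp 0 j *: col j (adj P).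
  rewrite -col_mulmx AE invmx_unitary ?spectral_unitarymx // -adj_tstar.
  rewrite -!mulmxA PQ mulmx1 mul_mx_diag.
  by apply/matrixP=> i k; rewrite !mxE mulrC.
exists (adj P), (fun j => sp 0 j); split=> // j; apply/CrealP.
have -> : sp 0 j = hform A (col j (adj P)) (col j (adj P)).
  by rewrite /hform -mulmxA eig -scalemxAr mxE adj_col_mul_col QQ mxE eqxx mulr1.
by rewrite hform_conj.
Qed.

Lemma mulmx_adj_sum_col n m (Q : 'M[C]_(n, m)) :
  Q *m adj Q = \sum_l col l Q *m adj (col l Q).
Proof.
apply/matrixP=> i k; rewrite !mxE summxE; apply: eq_bigr => l _.
by rewrite !mxE big_ord1 !mxE.
Qed.

Lemma psd_eigen_nonpos_eq0 n (P : 'M[C]_n) (v : 'cV[C]_n) a :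
  psd P -> a <= 0 -> P *m (P *m v) = a *: (P *m v) -> P *m v = 0.
Proof.
move=> psdP a_le0 eig; apply: adj_mulmx_eq0; apply: le_anti.
rewrite adj_mulmx_ge0 andbT adjM psdP.1 -mulmxA eig -scalemxAr mxE mulrC.
by rewrite mulr_ge0_le0 // mulmxA; apply: psd_hform_ge0.
Qed.

Lemma psd_diff_eigen_nonpos n (Y W : 'M[C]_n) (q : 'cV[C]_n) a :
  psd Y -> Y *m W = 0 -> (Y - W) *m q = a *: q -> a <= 0 -> Y *m q = 0.
Proof.
move=> psdY YW eig a_le0; apply: psd_eigen_nonpos_eq0 a_le0 _ => //.
have Yq : Y *m q = W *m q + a *: q by rewrite -eig mulmxBl addrC subrK.
by rewrite [in LHS]Yq mulmxDr mulmxA YW mul0mx add0r scalemxAr.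
Qed.

Lemma psd_annihilating_eigenbasis n (Y W : 'M[C]_n) : psd Y -> psd W -> Y *m W = 0 ->
  exists (Q : 'M[C]_n) (al be : 'I_n -> C),
    [/\ adj Q *m Q = 1%:M,
        forall j, Y *m col j Q = al j *: col j Q,
        forall j, W *m col j Q = be j *: col j Q,
        forall j, 0 <= be j
      & forall j, al j != 0 -> be j = 0].
Proof.
move=> psdY psdW YW.
have WY : W *m Y = 0 by rewrite -psdY.1 -psdW.1 -adjM YW adj0.
(* On an eigenvector of Y - W with eigenvalue lam, Y acts as max(lam, 0) and W as
   max(-lam, 0). *)
have [|Q [lam [QQ lamR eig]]] := @hermitian_eigenbasis n (Y - W).
  by rewrite adjB psdY.1 psdW.1.
have Yq0 j : lam j <= 0 -> Y *m col j Q = 0 := psd_diff_eigen_nonpos psdY YW (eig j).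
have Wq0 j : ~~ (lam j <= 0) -> W *m col j Q = 0.
  move=> lam_gt0; apply: (psd_diff_eigen_nonpos (a := - lam j) psdW WY).
    by rewrite -opprB mulNmx eig scaleNr.
  by rewrite oppr_le0 ltW // real_ltNge ?real0.
exists Q, (fun j => if lam j <= 0 then 0 else lam j),
  (fun j => if lam j <= 0 then - lam j else 0).
split=> // j; case: ifP => [lam_le0 | /negbT lam_gt0].
- by rewrite Yq0 // scale0r.
- by rewrite -eig mulmxBl Wq0 // subr0.
- by rewrite scaleNr -eig mulmxBl Yq0 // sub0r opprK.
- by rewrite Wq0 // scale0r.
- by rewrite oppr_ge0.
- by [].
- by rewrite eqxx.
- by [].
Qed.

Lemma psd_kernel_decomposition n (Y W : 'M[C]_n) : psd Y -> psd W -> Y *m W = 0 ->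
  exists m (U : 'M[C]_(n, m)) (a : 'I_m -> C),
    [/\ adj U *m U = 1%:M,
        (forall x : 'cV[C]_n, Y *m x = 0 <-> exists c : 'cV[C]_m, x = U *m c),
        (forall j, 0 <= a j)
      & W = \sum_(j < m) a j *: (col j U *m adj (col j U))].
Proof.
move=> psdY psdW YW.
have [Q [al [be [QQ Yq Wq be_ge0 al_be]]]] := psd_annihilating_eigenbasis psdY psdW YW.
pose S := [set j | al j == 0].
pose e (j : 'I_#|S|) : 'I_n := enum_val j.
have eS j : al (e j) = 0 by apply/eqP; have := enum_valP j; rewrite inE.
exists #|S|, (colsub e Q), (fun j => be (e j)); split=> //.
- apply/matrixP=> i j; rewrite -adj_col_mul_col !col_colsub adj_col_mul_col QQ.
  by rewrite !mxE (inj_eq enum_val_inj).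
- split=> [Yx | [c ->]]; last first.
    rewrite mulmxA mulmx_colsub (_ : colsub e (Y *m Q) = 0) ?mul0mx //.
    apply/matrixP=> i j; move/matrixP/(_ i 0): (Yq (e j)); rewrite eS scale0r.
    by rewrite -col_mulmx !mxE.
  exists (\col_j (adj Q *m x) (e j) 0).
  have xE : x = \sum_l (adj Q *m x) l 0 *: col l Q.
    by rewrite -mulmx_sum_col mulmxA (mulmx1C QQ) mul1mx.
  rewrite mulmx_sum_col {1}xE (bigID (mem S)) /= [X in _ + X]big1 ?addr0 => [|l].
    by rewrite big_enum_val; apply: eq_bigr => j _; rewrite col_colsub mxE.
  rewrite inE => al_neq0.
  have : adj (Y *m col l Q) *m x = 0 by rewrite adjM psdY.1 -mulmxA Yx mulmx0.
  rewrite Yq adjZ -scalemxAl => /(congr1 (fun M : 'M[C]_1 => M 0 0)).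
  rewrite mxE [RHS]mxE => /eqP; rewrite mulf_eq0 conjC_eq0 (negbTE al_neq0) /=.
  by move=> /eqP qx0; rewrite -adj_col_mul_col col_id qx0 scale0r.
rewrite -[LHS]mulmx1 -(mulmx1C QQ) mulmx_adj_sum_col mulmx_sumr.
rewrite (bigID (mem S)) /= [X in _ + X]big1 ?addr0 => [|l]; last first.
  by rewrite inE mulmxA Wq => /al_be ->; rewrite scale0r mul0mx.
rewrite big_enum_val; apply: eq_bigr => j _.
by rewrite col_colsub mulmxA Wq -scalemxAl.
Qed.

End Spectral.

Section RankOnePart.
Variable C : numClosedFieldType.
Variables (n : nat) (V : 'M[C]_n).

Definition rank_one_part (y : 'cV[C]_n) : 'M[C]_n :=
  (hform V y y)^-1 *: (V *m y *m adj (V *m y)).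

Lemma mulmx_rank_one_part m (B : 'M[C]_(m, n)) y : B *m V = 0 -> B *m rank_one_part y = 0.
Proof. by move=> BV; rewrite -scalemxAr !mulmxA BV !mul0mx scaler0. Qed.

Hypothesis psdV : psd V.

Lemma psd_hform_gt0 y : V *m y != 0 -> 0 < hform V y y.
Proof.
move=> Vy; rewrite lt_def psd_hform_ge0 // andbT.
by apply: contraNneq Vy => /(psd_mulmx_eq0 psdV) ->.
Qed.

Lemma psd_rank_one_part y : psd (rank_one_part y).
Proof. by apply: psdZ; [rewrite invr_ge0 psd_hform_ge0 | exact: psd_outer]. Qed.

Lemma mxrank_rank_one_part y : V *m y != 0 -> \rank (rank_one_part y) = 1%N.
Proof.
move=> Vy; rewrite mxrank_scale_nz ?invr_eq0 ?gt_eqF ?psd_hform_gt0 //.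
apply/eqP; rewrite eqn_leq (leq_trans (mxrankM_maxl _ _) (rank_leq_col _)) /=.
rewrite lt0n mxrank_eq0; apply: contraNneq Vy => /(congr1 mxtrace).
by rewrite mxtrace_mulC mxtrace0 /mxtrace big_ord1 => /adj_mulmx_eq0 ->.
Qed.

Lemma psd_sub_rank_one_part y : V *m y != 0 -> psd (V - rank_one_part y).
Proof.
move=> /psd_hform_gt0 c_gt0; set c := hform V y y in c_gt0 *.
split=> [|x]; first by rewrite adjB psdV.1 adjZ adjM adjK geC0_conj // invr_ge0 ltW.
set be := hform V y x.
have -> : (adj x *m (V - rank_one_part y) *m x) 0 0 = hform V x x - c^-1 * (be^* * be).
  rewrite mulmxBr mulmxBl -scalemxAr -scalemxAl mxE [X in _ + X]mxE.
  rewrite [X in _ - X]mxE -/c !mulmxA -[_ *m adj (V *m y) *m x]mulmxA.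
  rewrite [(_ *m (adj (V *m y) *m x)) 0 0]mxE big_ord1.
  have -> : (adj x *m V *m y) 0 ord0 = be^* by rewrite hform_conj ?psdV.1.
  by rewrite adjM psdV.1.
have := psd_cauchy_schwarz x y psdV; rewrite -/c -/be pmulr_rge0 // => cs.
rewrite (_ : _ - _ = c^-1 * (c * hform V x x - be * be^*)); last by field; rewrite gt_eqF.
by rewrite mulr_ge0 // invr_ge0 ltW.
Qed.

Lemma mulmx_rank_one_part_adj (h : 'rV[C]_n) :
  V *m adj h != 0 -> h *m rank_one_part (adj h) = h *m V.
Proof.
move=> /psd_hform_gt0 c_gt0; rewrite -scalemxAr !mulmxA.
have -> : h *m V *m adj h = (hform V (adj h) (adj h))%:M.
  by rewrite /hform adjK [LHS]mx11_scalar.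
rewrite mul_scalar_mx adjM adjK psdV.1 scalerA mulVf ?scale1r ?gt_eqF //.
Qed.

Lemma rank_one_split (h : 'rV[C]_n) (Om : 'M[C]_n) : V != 0 -> Om *m V = 0 ->
  exists Vh : 'M[C]_n,
    [/\ psd Vh, \rank Vh = 1%N, psd (V - Vh), h *m Vh = h *m V & Om *m Vh = 0].
Proof.
move=> V_neq0 OmV.
(* y = h^H keeps h V; if V h^H = 0 then h V = 0 and any y with V y <> 0 does. *)
have [y [Vy hy]] : exists y, V *m y != 0 /\ h *m rank_one_part y = h *m V.
  have [Vh0 | Vh] := eqVneq (V *m adj h) 0; last first.
    by exists (adj h); rewrite Vh mulmx_rank_one_part_adj.
  have hV : h *m V = 0 by rewrite -[h]adjK -psdV.1 -adjM Vh0 adj0.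
  have /existsP [j Vj] : [exists j, V *m (delta_mx j 0 : 'cV_n) != 0].
    apply: contraNT V_neq0 => /existsPn Vj0; apply/eqP/matrixP=> i j.
    by move/negPn/eqP/matrixP/(_ i 0): (Vj0 j); rewrite -colE !mxE.
  by exists (delta_mx j 0); rewrite Vj hV mulmx_rank_one_part.
exists (rank_one_part y); split=> //.
- exact: psd_rank_one_part.
- exact: mxrank_rank_one_part.
- exact: psd_sub_rank_one_part.
- exact: mulmx_rank_one_part.
Qed.

End RankOnePart.

Section Replacement.
Variables (C : numClosedFieldType) (ln ex : C -> C) (N L K Z : nat).
Variables (d : data C N L K Z) (p : point C N L K Z) (k : 'I_K) (Vh : 'M[C]_L).

Local Notation W := (Vk p k - Vh).
Local Notation p' := (replace p k Vh (Lam p + W)).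

Lemma mxtrace_sum_replace :
  \sum_i \tr (Vk p' i) + \tr (Lam p') = \sum_i \tr (Vk p i) + \tr (Lam p).
Proof.
rewrite (bigD1 k) //= [in RHS](bigD1 k) //= eqxx mxtraceD raddfB /=.
by rewrite (eq_bigr (fun i => \tr (Vk p i))) => [|i /negbTE -> //]; ring.
Qed.

Lemma interf_replace (A : 'M[C]_L) j :
  interf p' A j = interf p A j + (if j == k then \tr (A *m W) else 0).
Proof.
rewrite /interf /= mulmxDr mxtraceD; case: eqP => [->|/eqP jk].
  rewrite addrA; congr (_ + _ + _); apply: eq_bigr => i /negbTE -> //.
rewrite addr0 (bigD1 k) 1?eq_sym //= [in RHS](bigD1 k) 1?eq_sym //= eqxx.
rewrite (eq_bigr (fun i => \tr (A *m Vk p i))) => [|i /andP[_ /negbTE ->] //].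
by rewrite mulmxBr raddfB /=; ring.
Qed.

Hypothesis hW : hv d k *m W = 0.

Lemma Hm_mulmx_sub_eq0 : Hm d k *m W = 0.
Proof. by rewrite /Hm -mulmxA hW mulmx0. Qed.

Lemma interf_replace_Hm j : interf p' (Hm d j) j = interf p (Hm d j) j.
Proof.
by rewrite interf_replace; case: eqP => [->|_]; rewrite ?Hm_mulmx_sub_eq0 ?mxtrace0 addr0.
Qed.

Lemma mxtrace_Hm_replace j : \tr (Hm d j *m Vk p' j) = \tr (Hm d j *m Vk p j).
Proof.
rewrite /=; case: eqP => [->|//]; congr (\tr _).
by apply/esym/eqP; rewrite -subr_eq0 -mulmxBr Hm_mulmx_sub_eq0.
Qed.

Lemma feasible_replace : psd Vh -> psd W -> feasible ln ex d p -> feasible ln ex d p'.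
Proof.
move=> psdVh psdW.
move=> [? [? [? [C1 [? [[? [psdVk psdLam]] [C4 [C5 [C6 [? [C8 [? [C10 [? [C12 ?]]]]]]]]]]]]]]].
have trHe z : 0 <= \tr (Hem d z *m W) by apply: psd_mxtrace_outer_ge0.
do 3 (split; first done); split; first by rewrite mxtrace_sum_replace.
split; first done; split.
  split; first done; split=> [i /=|]; last exact: psdD.
  by case: eqP => _; [exact: psdVh | exact: psdVk].
split; first by move=> j; rewrite interf_replace_Hm; apply: C4.
split; first by move=> j; rewrite mxtrace_Hm_replace; apply: C5.
split.
  move=> j z; apply: le_trans (C6 j z); rewrite lerD2r /=.
  by case: eqP => [->|_]; rewrite ?lexx // -subr_ge0 -raddfB -mulmxBr trHe.
split; first done; split.
  move=> j z; rewrite interf_replace; case: eqP => [->|_]; last by rewrite addr0; apply: C8.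
  exact: psd_mx2_addr (C8 k z) (trHe z).
split; first done; split; first by move=> j; rewrite mxtrace_Hm_replace; apply: C10.
split; first done; split; last done.
by move=> j; rewrite interf_replace_Hm; apply: C12.
Qed.

End Replacement.

(* psi5 k z stands for psi_5^{z,k}, psi6 k z for psi_6^{z,k}. *)
Theorem mainTheorem3 (C : numClosedFieldType) (ln ex : C -> C)
    (N L K Z : nat) (HN : (0 < N)%N) (HL : (0 < L)%N) (HK : (0 < K)%N)
    (HZ : (0 < Z)%N)
    (d : data C N L K Z) (Hd : data_ok d) (z0 : 'I_Z)
    (p : point C N L K Z) (Hopt : optimal ln ex d z0 p)
    (psi1 psi2 : C) (psi3 psi4 psi7 psi8 : 'I_K -> C)
    (psi5 psi6 : 'I_K -> 'I_Z -> C) (psi9 : 'I_L -> C)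
    (Omega0 : 'M[C]_N) (Omega : 'I_K -> 'M[C]_L)
    (Hpsi : [/\ 0 <= psi1, 0 <= psi2, (forall l, 0 <= psi9 l)
              & forall k, [/\ 0 <= psi3 k, 0 < psi4 k, 0 <= psi7 k, 0 <= psi8 k
                            & (forall z, 0 <= psi5 k z /\ 0 <= psi6 k z)]])
    (HK2 : forall k, Omega k = Ymx d psi1 psi3 psi7 psi8 psi5 psi6 k - psi4 k *: Hm d k)
    (HK4 : Omega0 *m V0 p = 0 /\ forall k, Omega k *m Vk p k = 0)
    (HK5 : psd Omega0 /\ forall k, psd (Omega k))
    (k : 'I_K) (Hrank : (1 < \rank (Vk p k))%N) :
  exists Vh : 'M[C]_L,
    [/\ psd Vh /\ \rank Vh = 1%N, psd (Vk p k - Vh),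
        feasible ln ex d (replace p k Vh (Lam p + (Vk p k - Vh))),
        objective ln d z0 (replace p k Vh (Lam p + (Vk p k - Vh)))
          = objective ln d z0 p
      & (exists (m : nat) (U : 'M[C]_(L, m)) (a : 'I_m -> C),
          [/\ adj U *m U = 1%:M,
              (forall x : 'cV[C]_L,
                 Ymx d psi1 psi3 psi7 psi8 psi5 psi6 k *m x = 0
                 <-> exists c : 'cV[C]_m, x = U *m c),
              (forall j, 0 <= a j)
            & (Vk p k - Vh = \sum_(j < m) a j *: (col j U *m adj (col j U)))])].
Proof.
have [feas _] := Hopt.
have [_ [_ [_ [_ [_ [[_ [psdVk _]] _]]]]]] := feas.
have [_ _ _ /(_ k) [_ psi4_gt0 _ _ _]] := Hpsi.
have V_neq0 : Vk p k != 0 by apply: contraTneq Hrank => ->; rewrite mxrank0.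
have [Vh [psdVh rkVh psdW hVh OmVh]] :=
  rank_one_split (psdVk k) (hv d k) V_neq0 (HK4.2 k).
have hW : hv d k *m (Vk p k - Vh) = 0 by rewrite mulmxBr hVh subrr.
set Y := Ymx d psi1 psi3 psi7 psi8 psi5 psi6 k.
have YE : Y = Omega k + psi4 k *: Hm d k by rewrite HK2 subrK.
have psdY : psd Y.
  rewrite YE; apply: psdD (HK5.2 k) (psdZ (ltW psi4_gt0) _).
  by rewrite /Hm -[X in _ *m X]adjK; apply: psd_outer.
have YW : Y *m (Vk p k - Vh) = 0.
  rewrite YE mulmxDl -scalemxAl (Hm_mulmx_sub_eq0 hW) scaler0 addr0.
  by rewrite mulmxBr (HK4.2 k) OmVh subrr.
exists Vh; split=> //.
- exact: feasible_replace.
- exact: psd_kernel_decomposition.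
Qed.
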